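(* Let $G_1,G_2$ be induced subgraphs of a graph $G$ with $V(G)=V(G_1)\cup V(G_2)$ and $E(G)=E(G_1)\cup E(G_2)$, let $S$ be the subgraph induced by $V(G_1)\cap V(G_2)$, suppose $G-V(S)$ is disconnected and $S$ contains a nonedge $e$. If $G_1$ is an atom and either $G_2$ or $G_2\cup e$ is an atom, then $G$ is an atom.
   Context: A clique is a set of pairwise adjacent vertices (possibly empty). A clique separator of a graph $H$ is a clique $U$ such that $H-U$ (the subgraph induced by $V(H)\setminus U$) has at least two connected components. A graph is an atom if it is nonempty and has no clique separator. $G_2\cup e$ denotes $G_2$ with $e$ added as an edge. *)

(* A graph is given by a vertex set V : {set T} on a finType T
   and an adjacency relation r : rel T (only used on V).  G itself is the
   simple graph (T, e) with e symmetric and irreflexive. *)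
From mathcomp Require Import all_boot.
Set Implicit Arguments. Unset Strict Implicit. Unset Printing Implicit Defensive.

Section Graphs.
Variable T : finType.

Definition restr (r : rel T) (W : {set T}) : rel T :=
  [rel a b | [&& r a b, a \in W & b \in W]].

Definition disconnected (r : rel T) (W : {set T}) : Prop :=
  exists x y, [/\ x \in W, y \in W & ~~ connect (restr r W) x y].

Definition clique (r : rel T) (U : {set T}) : Prop :=
  forall x y, x \in U -> y \in U -> x != y -> r x y.

Definition clique_separator (r : rel T) (V U : {set T}) : Prop :=
  [/\ U \subset V, clique r U & disconnected r (V :\: U)].

Definition atom (r : rel T) (V : {set T}) : Prop :=
  V != set0 /\ forall U : {set T}, ~ clique_separator r V U.

Definition add_edge (r : rel T) (u v : T) : rel T :=
  [rel a b | [|| r a b, (a == u) && (b == v) | (a == v) && (b == u)]].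

End Graphs.

(* Let U be a clique separator of G.  Since G1 is an atom, the clique
   V1 ∩ U does not separate G1, so V1 \ U is connected in G - U; likewise
   V2 \ U is connected, possibly through the added edge uv, whose endpoints
   (when they avoid U) are already joined inside V1 \ U.  As u and v are not
   adjacent, one of them lies in V1 ∩ V2 \ U, linking the two parts, so
   G - U is connected: a contradiction. *)
From mathcomp Require Import all_boot.

Set Implicit Arguments.
Unset Strict Implicit.
Unset Printing Implicit Defensive.

Section Atoms.
Variable T : finType.
Implicit Types (r s : rel T) (A U V W : {set T}).

Lemma restr_connect_sym r W : symmetric r -> connect_sym (restr r W).
Proof.
move=> r_sym; apply: sym_connect_sym => a b /=.
by rewrite /restr /= r_sym [(a \in W) && _]andbC.
Qed.

Lemma connect_restrS r s A W x y : subrel r s -> A \subset W ->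
  connect (restr r A) x y -> connect (restr s W) x y.
Proof.
move=> srs sAW; apply: connect_sub => a b /and3P [rab aA bA].
by apply: connect1; rewrite /restr /= srs // !(subsetP sAW).
Qed.

Lemma cliqueS r U A : A \subset U -> clique r U -> clique r A.
Proof. by move=> sAU cU x y xA yA; apply: cU; apply: (subsetP sAU). Qed.

Lemma clique_add_edge r U u v : clique r U -> clique (add_edge r u v) U.
Proof. by move=> cU x y xU yU xy; rewrite /add_edge /= cU. Qed.

Lemma atom_connect r V U x y : atom r V -> clique r U ->
  x \in V :\: U -> y \in V :\: U -> connect (restr r (V :\: U)) x y.
Proof.
move=> [_ noSep] cU xVU yVU; apply: contraT => not_xy.
case: (noSep (V :&: U)); split; first exact: subsetIl.
  by apply: cliqueS cU; apply: subsetIr.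
by exists x, y; rewrite setDIr setDv set0U.
Qed.

Lemma connect_add_edge r u v A W x y : symmetric r -> A \subset W ->
    (u \in A -> v \in A -> connect (restr r W) u v) ->
  connect (restr (add_edge r u v) A) x y -> connect (restr r W) x y.
Proof.
move=> r_sym sAW conn_uv; apply: connect_sub => a b /and3P [/or3P rab aA bA].
case: rab => [rab | /andP [/eqP-> /eqP->] | /andP [/eqP-> /eqP->]] in aA bA *.
- by apply: connect1; rewrite /restr /= rab !(subsetP sAW).
- exact: conn_uv.
- by rewrite restr_connect_sym //; apply: conn_uv.
Qed.

Lemma connected_star r W w : symmetric r ->
  (forall z, z \in W -> connect (restr r W) z w) -> ~ disconnected r W.
Proof.
move=> r_sym conn_w [x [y [xW yW not_xy]]].
have := conn_w y yW; rewrite restr_connect_sym // => conn_wy.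
by rewrite (connect_trans (conn_w x xW) conn_wy) in not_xy.
Qed.

End Atoms.

Theorem mainTheorem17 (T : finType) (e : rel T)
  (e_sym : symmetric e) (e_irr : irreflexive e)
  (V1 V2 : {set T})
  (hV : V1 :|: V2 = [set: T])
  (hE : forall x y, e x y ->
          (x \in V1 /\ y \in V1) \/ (x \in V2 /\ y \in V2))
  (hdis : disconnected e (~: (V1 :&: V2)))
  (u v : T) (hu : u \in V1 :&: V2) (hv : v \in V1 :&: V2)
  (huv : u != v) (hne : ~~ e u v) :
  atom e V1 -> (atom e V2 \/ atom (add_edge e u v) V2) ->
  atom e [set: T].
Proof.
move=> atom1 atom2; split; first by apply/set0Pn; exists u.
move=> U [_ cU]; set W := [set: T] :\: U.
have subW V : V :\: U \subset W by apply: setSD; apply: subsetT.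
have conn1 x y : x \in V1 :\: U -> y \in V1 :\: U -> connect (restr e W) x y.
  by move=> xV yV; apply: connect_restrS (subW V1) (atom_connect atom1 cU xV yV).
have conn2 x y : x \in V2 :\: U -> y \in V2 :\: U -> connect (restr e W) x y.
  move=> xV yV; case: atom2 => [atom2 | atom2e].
    exact: connect_restrS (subW V2) (atom_connect atom2 cU xV yV).
  apply: (connect_add_edge e_sym (subW V2)); last first.
    exact: atom_connect atom2e (clique_add_edge u v cU) xV yV.
  case/setIP: hu => u1 _; case/setIP: hv => v1 _.
  by move=> /setDP [_ uU] /setDP [_ vU]; apply: conn1; apply/setDP.
have [w w12 wU] : exists2 w, w \in V1 :&: V2 & w \notin U.
  case: (boolP (u \in U)) => uU; last by exists u.
  case: (boolP (v \in U)) => vU; last by exists v.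
  by rewrite cU in hne.
apply: (connected_star (w := w) e_sym) => z /setDP [_ zU].
case/setIP: w12 => w1 w2.
have : z \in V1 :|: V2 by rewrite hV.
by case/setUP => zV; [apply: conn1 | apply: conn2]; apply/setDP.
Qed.
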